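(* Let $\lambda\in(1/2,1)$ and set $\rho=\lambda\Phi_1+(1-\lambda)|01\rangle\langle01|$ and $\sigma=\lambda\Phi_1+(1-\lambda)\Phi_2$. Then there exists no non-entangling map $\Lambda:\mathcal{D}\to\mathcal{D}$ such that $\Lambda(\rho)=\sigma$.
   Context: $\mathcal{D}$ is the set of two-qubit density matrices on $\mathbb{C}^2\otimes\mathbb{C}^2$ (Hermitian, positive semidefinite, trace one $4\times4$ matrices), written in the computational basis $\{|ij\rangle\}_{i,j\in\{0,1\}}$. The Bell vectors are $|\Phi_1\rangle=\frac{1}{\sqrt2}(|00\rangle+|11\rangle)$, $|\Phi_2\rangle=\frac{1}{\sqrt2}(|00\rangle-|11\rangle)$, and $\Phi_i=|\Phi_i\rangle\langle\Phi_i|$. (These are the states $\rho_{\vec\lambda}=\lambda_1\Phi_1+\lambda_2|01\rangle\langle01|+\lambda_3\Phi_2+\lambda_4|10\rangle\langle10|$ and $\sigma_{\vec\lambda}=\sum_j\lambda_j\Phi_j$, with $|\Phi_3\rangle=\frac{1}{\sqrt2}(|10\rangle+|01\rangle)$, $|\Phi_4\rangle=\frac{1}{\sqrt2}(|10\rangle-|01\rangle)$, for $\vec\lambda=(\lambda,1-\lambda,0,0)$.) A state is separable if it is a convex combination of product states $|\phi\rangle\langle\phi|\otimes|\chi\rangle\langle\chi|$. A map $\Lambda:\mathcal{D}\to\mathcal{D}$ is non-entangling (NE) if it is completely positive and trace preserving and maps every separable state to a separable state. *)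

From HB Require Import structures.
From mathcomp Require Import all_boot all_order all_algebra.
From mathcomp Require Import reals complex.
Set Implicit Arguments. Unset Strict Implicit. Unset Printing Implicit Defensive.
Import Order.TTheory GRing.Theory Num.Theory.
Local Open Scope ring_scope.
Local Open Scope complex_scope.

Section QuantumDefs.
Variable R : realType.
Local Notation C := R[i].

Definition adj m n (A : 'M[C]_(m, n)) : 'M[C]_(n, m) := (map_mx (fun x => x^*) A)^T.

Definition hermitian n (A : 'M[C]_n) : Prop := adj A = A.

(* positive semidefinite: Hermitian with nonnegative quadratic form
   (0 <= z in C means z is real and nonnegative) *)
Definition psd n (A : 'M[C]_n) : Prop :=
  hermitian A /\ forall v : 'cV[C]_n, 0 <= (adj v *m A *m v) 0 0.

(* two-qubit density matrices, computational basis |00>,|01>,|10>,|11> = 0,1,2,3 *)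
Definition density (A : 'M[C]_4) : Prop := psd A /\ \tr A = 1.

Definition proj n (v : 'cV[C]_n) : 'M[C]_n := v *m adj v.
Definition unit_vec n (v : 'cV[C]_n) : Prop := (adj v *m v) 0 0 = 1.

(* tensor product of qubit vectors: (u (x) v)_{|ij>} = u_i v_j, |ij> has index 2i+j *)
Definition kronv (u v : 'cV[C]_2) : 'cV[C]_4 :=
  \col_(k < 4) (u (inord (k %/ 2)) 0 * v (inord (k %% 2)) 0).

(* separable: finite convex combination of product pure states
   |phi><phi| (x) |chi><chi| = |phi (x) chi><phi (x) chi| *)
Definition separable (A : 'M[C]_4) : Prop :=
  exists (n : nat) (p : 'I_n -> R) (phi chi : 'I_n -> 'cV[C]_2),
    [/\ forall k, 0 <= p k,
        \sum_(k < n) p k = 1,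
        forall k, unit_vec (phi k) /\ unit_vec (chi k)
      & A = \sum_(k < n) (p k)%:C *: proj (kronv (phi k) (chi k))].

(* a 4n x 4n matrix given by its n x n array of 4x4 blocks X a b is PSD *)
Definition block_psd n (X : 'I_n -> 'I_n -> 'M[C]_4) : Prop :=
  (forall a b, X b a = adj (X a b)) /\
  forall v : 'I_n -> 'cV[C]_4,
    0 <= \sum_(a < n) \sum_(b < n) (adj (v a) *m X a b *m v b) 0 0.

(* complete positivity: id_n (x) L is positive for every n *)
Definition completely_positive (L : 'M[C]_4 -> 'M[C]_4) : Prop :=
  forall n (X : 'I_n -> 'I_n -> 'M[C]_4),
    block_psd X -> block_psd (fun a b => L (X a b)).

Definition trace_preserving (L : 'M[C]_4 -> 'M[C]_4) : Prop :=
  forall A, \tr (L A) = \tr A.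

Definition non_entangling (L : {linear 'M[C]_4 -> 'M[C]_4}) : Prop :=
  [/\ completely_positive L, trace_preserving L &
      forall A, density A -> separable A -> separable (L A)].

Definition ket (k : 'I_4) : 'cV[C]_4 := delta_mx k 0.
Definition invsqrt2 : C := ((Num.sqrt (2 : R))^-1)%:C.
Definition Phi1v : 'cV[C]_4 := invsqrt2 *: (ket 0 + ket 3).
Definition Phi2v : 'cV[C]_4 := invsqrt2 *: (ket 0 - ket 3).
Definition Phi1 : 'M[C]_4 := proj Phi1v.
Definition Phi2 : 'M[C]_4 := proj Phi2v.

Definition rho_state (lam : R) : 'M[C]_4 :=
  lam%:C *: Phi1 + (1 - lam)%:C *: proj (ket 1).
Definition sigma_state (lam : R) : 'M[C]_4 :=
  lam%:C *: Phi1 + (1 - lam)%:C *: Phi2.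

End QuantumDefs.

(* Write A, B, Y for the images under the non-entangling map of Phi1, |01><01| and
   |10><10|.  Every separable Z satisfies 2 |Z_{00,11}| <= Z_{01,01} + Z_{10,10} (AM-GM
   on product vectors), and positivity makes the diagonals of A, B, Y nonnegative.  As
   sigma = lam A + (1 - lam) B has vanishing |01>, |10> populations, so do A and B; hence
   B_{00,11} = 0 and A_{00,11} = (lam - 1/2) / lam.  Averaging the product states
   (c|0> + w s|1>) (x) (s|0> + w^* c|1>) over w in {1, i, -1, -i} gives
   8 c^2 s^2 Phi1 + 4 c^4 |01><01| + 4 s^4 |10><10|, so the bound for their images
   yields 2 c^2 |A_{00,11}| <= s^2.  For s^2 = lam - 1/2 this forces lam >= 1. *)

From Pilot Require Import Defs.
From HB Require Import structures.
From mathcomp Require Import all_boot all_order all_algebra.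
From mathcomp Require Import reals complex.
From mathcomp Require Import ring lra.
Set Implicit Arguments. Unset Strict Implicit. Unset Printing Implicit Defensive.
Import Order.TTheory GRing.Theory Num.Theory.
Local Open Scope complex_scope.
Local Open Scope ring_scope.

Lemma mulr2n_le_sqrD (F : numDomainType) (x y : F) :
  x \is Num.real -> y \is Num.real -> x * y *+ 2 <= x ^+ 2 + y ^+ 2.
Proof.
move=> xR yR; have := realB xR yR; rewrite realEsqr sqrrB.
by rewrite addrAC subr_ge0.
Qed.

Lemma convex_comb_eq0 (F : numDomainType) (t x y : F) :
  0 < t < 1 -> 0 <= x -> 0 <= y -> t * x + (1 - t) * y = 0 -> x = 0 /\ y = 0.
Proof.
case/andP=> t_gt0 t_lt1 x_ge0 y_ge0 /eqP.
rewrite paddr_eq0 ?mulr_ge0 ?subr_ge0 ?(ltW t_gt0) ?(ltW t_lt1) //.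
rewrite !mulf_eq0 (gt_eqF t_gt0) subr_eq0 (gt_eqF t_lt1) /=.
by case/andP=> /eqP-> /eqP->.
Qed.

Lemma ord4P (P : 'I_4 -> Prop) : P 0 -> P 1 -> P 2 -> P 3 -> forall i, P i.
Proof.
move=> P0 P1 P2 P3 [[|[|[|[|//]]]] lt_i4].
- by rewrite (_ : Ordinal _ = 0) //; apply/val_inj.
- by rewrite (_ : Ordinal _ = 1) //; apply/val_inj.
- by rewrite (_ : Ordinal _ = 2) //; apply/val_inj.
- by rewrite (_ : Ordinal _ = 3) //; apply/val_inj.
Qed.

Lemma big_ord4 (V : nmodType) (F : 'I_4 -> V) :
  \sum_(k < 4) F k = F 0 + F 1 + F 2 + F 3.
Proof.
rewrite !big_ord_recr big_ord0 /= add0r.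
by congr (F _ + F _ + F _ + F _); apply/val_inj.
Qed.

Lemma big_ord2 (V : nmodType) (F : 'I_2 -> V) : \sum_(k < 2) F k = F 0 + F 1.
Proof.
rewrite !big_ord_recr big_ord0 /= add0r.
by congr (F _ + F _); apply/val_inj.
Qed.

(* [i == j] for distinct numerals of ['I_n] computes to [false], but [/=] does not
   simplify it. *)
Ltac eval_ord_eq :=
  rewrite ?eqxx; do ?(rewrite (_ : (_ == _ :> 'I__) = false); last by []).

Section TwoQubits.
Variable R : realType.
Local Notation C := R[i].
Implicit Types (a b : 'cV[C]_2) (M N : 'M[C]_4).

Lemma addmxE m n (A B : 'M[C]_(m, n)) i j : (A + B) i j = A i j + B i j.
Proof. by rewrite mxE. Qed.

Lemma scalemxE m n (x : C) (A : 'M[C]_(m, n)) i j : (x *: A) i j = x * A i j.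
Proof. by rewrite mxE. Qed.

Lemma conjCM (x y : C) : (x * y)^* = x^* * y^*.
Proof. exact: rmorphM. Qed.

Lemma conjCN (x : C) : (- x)^* = - x^*.
Proof. exact: rmorphN. Qed.

Lemma conjC_real (x : R) : x%:C^* = x%:C.
Proof. exact: conjc_real. Qed.

Lemma adjE m n (A : 'M[C]_(m, n)) i j : adj A i j = (A j i)^*.
Proof. by rewrite !mxE. Qed.

Lemma adjM m n p (A : 'M[C]_(m, n)) (B : 'M[C]_(n, p)) :
  adj (A *m B) = adj B *m adj A.
Proof. by rewrite /adj (map_mxM (@conjc R)) trmx_mul. Qed.

Lemma adjK m n (A : 'M[C]_(m, n)) : adj (adj A) = A.
Proof. by apply/matrixP => i j; rewrite !adjE conjCK. Qed.

Lemma projE n (v : 'cV[C]_n) i j : proj v i j = v i 0 * (v j 0)^*.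
Proof. by rewrite !mxE big_ord1 adjE. Qed.

Lemma proj_psd n (v : 'cV[C]_n) : psd (proj v).
Proof.
split; first by rewrite /Defs.hermitian /proj adjM adjK.
move=> w; rewrite /proj !mulmxA -mulmxA.
rewrite (_ : adj v *m w = adj (adj w *m v)); last by rewrite adjM adjK.
by rewrite mxE big_ord1 adjE mul_conjC_ge0.
Qed.

Lemma delta_form n (k : 'I_n) (M : 'M[C]_n) :
  (adj (delta_mx k 0 : 'cV[C]_n) *m M *m (delta_mx k 0 : 'cV[C]_n)) 0 0 = M k k.
Proof.
have -> : adj (delta_mx k 0 : 'cV[C]_n) = delta_mx 0 k :> 'rV[C]_n.
  by apply/matrixP => i j; rewrite adjE !mxE conjC_nat andbC.
by rewrite -rowE -colE !mxE.
Qed.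

Lemma unit_vec_delta n (k : 'I_n) : unit_vec (delta_mx k 0 : 'cV[C]_n).
Proof. by rewrite /unit_vec -[adj _]mulmx1 delta_form mxE eqxx. Qed.

Lemma tr_proj n (v : 'cV[C]_n) : \tr (proj v) = (adj v *m v) 0 0.
Proof. by rewrite /proj mxtrace_mulC /mxtrace big_ord1. Qed.

Lemma proj_density (v : 'cV[C]_4) : unit_vec v -> density (proj v).
Proof. by move=> v_unit; split; [exact: proj_psd | rewrite tr_proj]. Qed.

Lemma kronv0 (a b : 'cV[C]_2) : kronv a b 0 0 = a 0 0 * b 0 0.
Proof. by rewrite mxE; congr (a _ _ * b _ _); apply/val_inj; rewrite /= inordK. Qed.

Lemma kronv1 (a b : 'cV[C]_2) : kronv a b 1 0 = a 0 0 * b 1 0.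
Proof. by rewrite mxE; congr (a _ _ * b _ _); apply/val_inj; rewrite /= inordK. Qed.

Lemma kronv2 (a b : 'cV[C]_2) : kronv a b 2 0 = a 1 0 * b 0 0.
Proof. by rewrite mxE; congr (a _ _ * b _ _); apply/val_inj; rewrite /= inordK. Qed.

Lemma kronv3 (a b : 'cV[C]_2) : kronv a b 3 0 = a 1 0 * b 1 0.
Proof. by rewrite mxE; congr (a _ _ * b _ _); apply/val_inj; rewrite /= inordK. Qed.

Lemma ketE (k i : 'I_4) : ket R k i 0 = (i == k)%:R.
Proof. by rewrite mxE andbT. Qed.

Lemma ket1_kronv : ket R 1 = kronv (delta_mx 0 0) (delta_mx 1 0).
Proof.
apply/matrixP => i j; rewrite (ord1 j) ketE.
elim/ord4P: i; rewrite ?kronv0 ?kronv1 ?kronv2 ?kronv3 !mxE; eval_ord_eq.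
all: by rewrite ?mulr0 ?mulr1.
Qed.

Lemma ket2_kronv : ket R 2 = kronv (delta_mx 1 0) (delta_mx 0 0).
Proof.
apply/matrixP => i j; rewrite (ord1 j) ketE.
elim/ord4P: i; rewrite ?kronv0 ?kronv1 ?kronv2 ?kronv3 !mxE; eval_ord_eq.
all: by rewrite ?mulr0 ?mulr1.
Qed.

Lemma unit_vecE n (v : 'cV[C]_n) :
  unit_vec v <-> \sum_(k < n) (v k 0)^* * v k 0 = 1.
Proof.
by rewrite /unit_vec mxE; under eq_bigr do rewrite adjE.
Qed.

Lemma unit_vec_kronv a b : unit_vec a -> unit_vec b -> unit_vec (kronv a b).
Proof.
rewrite !unit_vecE big_ord4 !big_ord2 !kronv0 !kronv1 !kronv2 !kronv3.
move=> a_unit b_unit; rewrite -[RHS]mulr1 -{1}a_unit -b_unit !rmorphM /=; ring.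
Qed.

Lemma proj_kronv_separable a b :
  unit_vec a -> unit_vec b -> separable (proj (kronv a b)).
Proof.
move=> a_unit b_unit.
exists 1%N, (fun=> 1), (fun=> a), (fun=> b); split=> //.
- by rewrite big_ord1.
- by rewrite big_ord1 scale1r.
Qed.

Definition coherence_bounded (M : 'M[C]_4) := 2 * `|M 0 3| <= M 1 1 + M 2 2.

Lemma coherence_bounded_proj_kronv a b : coherence_bounded (proj (kronv a b)).
Proof.
rewrite /coherence_bounded !projE !kronv0 !kronv1 !kronv2 !kronv3.
rewrite -!normCK !normrM !norm_conjC !normrM !exprMn.
rewrite mulrC mulr_natr (mulrC `|a 1 0|) mulrACA -!exprMn.
rewrite [`|b 0 0| * _]mulrC.
by apply: mulr2n_le_sqrD; apply: rpredM; apply: normr_real.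
Qed.

Lemma coherence_bounded0 : coherence_bounded 0.
Proof. by rewrite /coherence_bounded !mxE normr0 mulr0 addr0. Qed.

Lemma coherence_boundedD M N :
  coherence_bounded M -> coherence_bounded N -> coherence_bounded (M + N).
Proof.
rewrite /coherence_bounded !mxE => bM bN.
by rewrite addrACA (le_trans _ (lerD bM bN)) // -mulrDr ler_wpM2l ?ler_normD.
Qed.

Lemma coherence_boundedZ (p : R) M :
  0 <= p -> coherence_bounded M -> coherence_bounded (p%:C *: M).
Proof.
move=> p_ge0; rewrite /coherence_bounded !mxE -mulrDr normrM.
rewrite ger0_norm ?ler0c //.
by move=> bM; rewrite mulrCA ler_wpM2l ?ler0c.
Qed.

Lemma separable_coherence_bounded M : separable M -> coherence_bounded M.
Proof.
case=> n [p [phi [chi [p_ge0 _ _ ->]]]].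
apply: (big_ind coherence_bounded coherence_bounded0 coherence_boundedD) => k _.
exact/coherence_boundedZ/coherence_bounded_proj_kronv.
Qed.

Lemma invsqrt2_normE : invsqrt2 R * (invsqrt2 R)^* = 2^-1.
Proof.
rewrite /invsqrt2 conjC_real -rmorphM -expr2 exprVn sqr_sqrtr ?ler0n //.
by rewrite fmorphV rmorph_nat.
Qed.

Lemma Phi1E i j :
  Phi1 R i j = 2^-1 * (((i == 0)%:R + (i == 3)%:R) * ((j == 0)%:R + (j == 3)%:R)).
Proof.
rewrite projE !mxE !andbT rmorphM rmorphD /= !conjC_nat -invsqrt2_normE; ring.
Qed.

Lemma Phi2E i j :
  Phi2 R i j = 2^-1 * (((i == 0)%:R - (i == 3)%:R) * ((j == 0)%:R - (j == 3)%:R)).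
Proof.
rewrite projE !mxE !andbT rmorphM rmorphB /= !conjC_nat -invsqrt2_normE; ring.
Qed.

Lemma sigma_state_entries (lam : R) :
  [/\ sigma_state lam 1 1 = 0, sigma_state lam 2 2 = 0
     & sigma_state lam 0 3 = (lam - 2^-1)%:C].
Proof.
(* Abstracting the concrete matrices keeps [rewrite] from unfolding them while
   matching, which is very slow. *)
move: Phi1E Phi2E; rewrite /sigma_state; move: (Phi1 R) (Phi2 R) => P Q PE QE.
split; rewrite addmxE !scalemxE PE QE; eval_ord_eq.
all: by rewrite ?mulr0n ?mulr1n ?rmorphB ?fmorphV ?rmorph_nat; field.
Qed.

Definition qubit (x y : C) : 'cV[C]_2 := \col_k (if k == 0 then x else y).

Lemma qubit0 x y : qubit x y 0 0 = x.
Proof. by rewrite mxE. Qed.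

Lemma qubit1 x y : qubit x y 1 0 = y.
Proof. by rewrite mxE. Qed.

Lemma unit_qubit x y : x^* * x + y^* * y = 1 -> unit_vec (qubit x y).
Proof. by rewrite unit_vecE big_ord2 !qubit0 !qubit1. Qed.

Lemma unit_qubit_phase (c s : R) (w : C) :
  c ^+ 2 + s ^+ 2 = 1 -> w^* * w = 1 -> unit_vec (qubit c%:C (w * s%:C)).
Proof.
move=> cs1 w1; apply: unit_qubit.
rewrite rmorphM /= !conjC_real mulrACA w1 mul1r.
by rewrite -!rmorphM -rmorphD /= -!expr2 cs1.
Qed.

Definition phases : seq C := [:: 1; 'i; -1; -'i].

Lemma phases_unit w : w \in phases -> w^* * w = 1.
Proof.
by rewrite -normCKC !inE => /or4P[] /eqP->; rewrite ?normrN ?normr1 ?normCi expr1n.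
Qed.

Definition twirl_vec (c s : R) (w : C) : 'cV[C]_4 :=
  kronv (qubit c%:C (w * s%:C)) (qubit s%:C (w^* * c%:C)).

(* Averaging over the phases kills every coherence of the product state except the
   one between |00> and |11>. *)
Lemma twirl_sum (c s : R) :
  \sum_(w <- phases) proj (twirl_vec c s w) =
  (8 * c ^+ 2 * s ^+ 2)%:C *: Phi1 R + (4 * (c ^+ 2) ^+ 2)%:C *: proj (ket R 1)
    + (4 * (s ^+ 2) ^+ 2)%:C *: proj (ket R 2).
Proof.
have i2 : 'i * 'i = -1 :> C by rewrite -expr2 sqrCi.
apply/matrixP => i j.
have := Phi1E i j; have := projE (ket R 1) i j; have := projE (ket R 2) i j.
move: (Phi1 R) (proj (ket R 1)) (proj (ket R 2)) => P Q1 Q2 Q2E Q1E PE.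
rewrite !(addmxE, scalemxE) {}PE {}Q1E {}Q2E !ketE.
rewrite summxE !big_cons big_nil addr0 !projE.
elim/ord4P: i; elim/ord4P: j.
all: rewrite ?kronv0 ?kronv1 ?kronv2 ?kronv3 ?qubit0 ?qubit1; eval_ord_eq.
all: rewrite ?mulr0n ?mulr1n !(conjCM, conjCN).
all: rewrite ?conjCK ?conjC_real ?conjCi ?conjC1 ?conjC0.
all: by field: i2.
Qed.

Lemma coherence_le_of_twirl (p q : R) (A B Y : 'M[C]_4) :
  0 <= p -> 0 < q -> A 1 1 = 0 -> A 2 2 = 0 ->
  B 1 1 = 0 -> B 2 2 = 0 -> B 0 3 = 0 ->
  coherence_bounded Y -> Y 1 1 + Y 2 2 <= 1 ->
  coherence_bounded ((8 * p * q)%:C *: A + (4 * p ^+ 2)%:C *: B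
                     + (4 * q ^+ 2)%:C *: Y) ->
  (2 * p)%:C * `|A 0 3| <= q%:C.
Proof.
move=> p_ge0 q_gt0 A11 A22 B11 B22 B03 Y_bounded Y_le1.
rewrite /coherence_bounded !(addmxE, scalemxE) A11 A22 B11 B22 B03.
rewrite !mulr0 !addr0 !add0r -mulrDr.
set a := (8 * p * q)%:C; set d := (4 * q ^+ 2)%:C => twirl_le.
have d_ge0 : 0 <= d by rewrite ler0c mulr_ge0 ?sqr_ge0.
have : 2 * `|a * A 0 3| <= 2 * d.
  rewrite -[a * A 0 3](addrK (d * Y 0 3)).
  apply: le_trans (_ : 2 * (`|a * A 0 3 + d * Y 0 3| + `|d * Y 0 3|) <= _).
    by rewrite ler_wpM2l ?ler_normB.
  rewrite mulrDr normrM (ger0_norm d_ge0) mulrCA.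
  apply: le_trans (lerD twirl_le (ler_wpM2l d_ge0 Y_bounded)) _.
  by rewrite -mulrDr mulrC ler_wpM2r //; apply: lerD.
have a_ge0 : 0 <= a by rewrite ler0c !mulr_ge0 // ltW.
rewrite normrM (ger0_norm a_ge0) ler_pM2l // /a /d.
rewrite (_ : 8 * p * q = 4 * q * (2 * p)); last by ring.
rewrite (_ : 4 * q ^+ 2 = 4 * q * q); last by ring.
rewrite [(4 * q * (2 * p))%:C]rmorphM [(4 * q * q)%:C]rmorphM -mulrA.
by rewrite ler_pM2l // ltcR mulr_gt0.
Qed.

Section NonEntanglingMap.
Variable L : {linear 'M[C]_4 -> 'M[C]_4}.
Hypothesis L_ne : non_entangling L.

Lemma ne_diag_ge0 X k : psd X -> 0 <= L X k k.
Proof.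
case: L_ne => L_cp _ _ [X_herm X_form].
have X_block : block_psd (fun _ _ : 'I_1 => X).
  by split=> [_ _ | v]; [rewrite X_herm | rewrite !big_ord1 X_form].
have [_ LX_form] := L_cp 1%N _ X_block.
by have := LX_form (fun=> ket R k); rewrite !big_ord1 delta_form.
Qed.

Lemma ne_product_coherence_bounded a b :
  unit_vec a -> unit_vec b -> coherence_bounded (L (proj (kronv a b))).
Proof.
case: L_ne => _ _ L_sep a_unit b_unit.
apply/separable_coherence_bounded/L_sep; last exact: proj_kronv_separable.
exact/proj_density/unit_vec_kronv.
Qed.

Lemma ne_twirl_coherence_bounded (p q : R) :
  0 <= p -> 0 <= q -> p + q = 1 ->
  coherence_bounded ((8 * p * q)%:C *: L (Phi1 R)
                     + (4 * p ^+ 2)%:C *: L (proj (ket R 1))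
                     + (4 * q ^+ 2)%:C *: L (proj (ket R 2))).
Proof.
move=> p_ge0 q_ge0 pq1; set c := Num.sqrt p; set s := Num.sqrt q.
have c2 : c ^+ 2 = p by rewrite sqr_sqrtr.
have s2 : s ^+ 2 = q by rewrite sqr_sqrtr.
have /(congr1 L) := twirl_sum c s.
rewrite linear_sum !linearD !linearZ /= c2 s2 => <-.
rewrite big_seq; apply: (big_ind coherence_bounded coherence_bounded0 coherence_boundedD).
move=> w /phases_unit w1; apply: ne_product_coherence_bounded.
  by apply: unit_qubit_phase; rewrite ?c2 ?s2.
apply: unit_qubit_phase; first by rewrite c2 s2 addrC.
by rewrite conjCK mulrC.
Qed.

Lemma ne_ket1_coherence_bounded : coherence_bounded (L (proj (ket R 1))).
Proof.
by rewrite ket1_kronv; apply: ne_product_coherence_bounded; apply: unit_vec_delta.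
Qed.

Lemma ne_ket2_coherence_bounded : coherence_bounded (L (proj (ket R 2))).
Proof.
by rewrite ket2_kronv; apply: ne_product_coherence_bounded; apply: unit_vec_delta.
Qed.

Lemma ne_ket1_coherence_eq0 :
  L (proj (ket R 1)) 1 1 = 0 -> L (proj (ket R 1)) 2 2 = 0 ->
  L (proj (ket R 1)) 0 3 = 0.
Proof.
move=> B11 B22; have := ne_ket1_coherence_bounded.
by rewrite /coherence_bounded B11 B22 addr0 pmulr_rle0 // normr_le0 => /eqP.
Qed.

Lemma ne_ket2_populations_le1 :
  L (proj (ket R 2)) 1 1 + L (proj (ket R 2)) 2 2 <= 1.
Proof.
case: L_ne => _ L_tp _; set Y := L _.
have Y00 := ne_diag_ge0 0 (proj_psd (ket R 2)).
have Y33 := ne_diag_ge0 3 (proj_psd (ket R 2)).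
have := L_tp (proj (ket R 2)).
rewrite tr_proj unit_vec_delta /mxtrace big_ord4 => <-.
by rewrite -subr_ge0 (_ : _ - _ = Y 0 0 + Y 3 3) ?addr_ge0 //; ring.
Qed.

Lemma ne_Phi1_coherence_le (p q : R) :
  0 <= p -> 0 < q -> p + q = 1 ->
  L (Phi1 R) 1 1 = 0 -> L (Phi1 R) 2 2 = 0 ->
  L (proj (ket R 1)) 1 1 = 0 -> L (proj (ket R 1)) 2 2 = 0 ->
  (2 * p)%:C * `|L (Phi1 R) 0 3| <= q%:C.
Proof.
move=> p_ge0 q_gt0 pq1 A11 A22 B11 B22.
apply: (coherence_le_of_twirl p_ge0 q_gt0 A11 A22 B11 B22).
- exact: ne_ket1_coherence_eq0.
- exact: ne_ket2_coherence_bounded.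
- exact: ne_ket2_populations_le1.
- exact: ne_twirl_coherence_bounded (ltW q_gt0) pq1.
Qed.

End NonEntanglingMap.

End TwoQubits.

Theorem theorem4 (R : realType) (lam : R) :
  2^-1 < lam < 1 ->
  ~ (exists L : {linear 'M[R[i]]_4 -> 'M[R[i]]_4},
        non_entangling L /\ L (rho_state lam) = sigma_state lam).
Proof.
case/andP=> lam_gt lam_lt1 [L [L_ne L_rho]].
have lam_gt0 : 0 < lam by apply: lt_trans lam_gt; rewrite invr_gt0.
set h := lam - 2^-1; have h_gt0 : 0 < h by rewrite subr_gt0.
have sigmaE i j : sigma_state lam i j =
    lam%:C * L (Phi1 R) i j + (1 - lam%:C) * L (proj (ket R 1)) i j.
  by rewrite -L_rho linearD !linearZ /= addmxE !scalemxE rmorphB.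
have [s11 s22 s03] := sigma_state_entries lam.
have diag_eq0 k : sigma_state lam k k = 0 ->
    L (Phi1 R) k k = 0 /\ L (proj (ket R 1)) k k = 0.
  rewrite sigmaE; apply: convex_comb_eq0; rewrite ?ltcR ?lam_gt0 ?lam_lt1 //;
  exact: ne_diag_ge0 L_ne _ _ (proj_psd _).
have [[A11 B11] [A22 B22]] := (diag_eq0 1 s11, diag_eq0 2 s22).
have A03 : L (Phi1 R) 0 3 = (h / lam)%:C.
  move: s03; rewrite sigmaE (ne_ket1_coherence_eq0 L_ne B11 B22) mulr0 addr0.
  by move/(canRL (mulKf (lt0r_neq0 _))) => ->; rewrite ?ltcR // fmorph_div mulrC.
have p_ge0 : 0 <= 1 - h by rewrite /h; lra.
have := ne_Phi1_coherence_le L_ne p_ge0 h_gt0 (subrK h 1) A11 A22 B11 B22.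
rewrite A03 ger0_norm ?ler0c ?divr_ge0 ?(ltW h_gt0) ?(ltW lam_gt0) //.
rewrite -rmorphM lecR mulrA ler_pdivrMr //.
rewrite /h; nra.
Qed.
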